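(* Let $n\ge 2$ and $t\ge 2$ be integers. Then there exists a constant $c>0$, depending only on $n$ and $t$, such that for every sufficiently large integer $q$ there exists a $t$-MIPPC$(n,q)$ of size at least $c\,q^{\frac{tn}{2t-1}}$; that is, $M_t(n,q)\ge c\,q^{\frac{tn}{2t-1}}$.
   Context: Let $Q$ be an alphabet with $|Q|=q$. An $(n,q)$ code is a subset $\mathcal{C}\subseteq Q^n$. For $\mathcal{S}\subseteq Q^n$ and $1\le i\le n$ let $\mathcal{S}(i)=\{\mathbf{c}(i):\mathbf{c}\in\mathcal{S}\}$, and let $\mathrm{desc}(\mathcal{S})=\mathcal{S}(1)\times\cdots\times\mathcal{S}(n)$. An $(n,q)$ code $\mathcal{C}$ is a $t$-MIPPC$(n,q)$ ($t$-identifiable parent property for multimedia fingerprinting) if for every nonempty $\mathcal{C}'\subseteq\mathcal{C}$ with $|\mathcal{C}'|\le t$ we have $\bigcap_{\mathcal{S}\in S_t(\mathcal{C}')}\mathcal{S}\neq\emptyset$, where $S_t(\mathcal{C}')=\{\mathcal{S}\subseteq\mathcal{C}: |\mathcal{S}|\le t,\ \mathrm{desc}(\mathcal{S})=\mathrm{desc}(\mathcal{C}')\}$. $M_t(n,q)$ denotes the maximum size $|\mathcal{C}|$ of a $t$-MIPPC$(n,q)$. *)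

From Stdlib Require Import Reals.
From mathcomp Require Import all_boot.
Set Implicit Arguments. Unset Strict Implicit. Unset Printing Implicit Defensive.

Definition word (n q : nat) := {ffun 'I_n -> 'I_q}.

Definition coord_set (n q : nat) (S : {set word n q}) (i : 'I_n) : {set 'I_q} :=
  [set (c : word n q) i | c in S].

Definition desc (n q : nat) (S : {set word n q}) : {set word n q} :=
  [set w : word n q | [forall i, w i \in coord_set S i]].

Definition St (n q t : nat) (C C' : {set word n q}) : {set {set word n q}} :=
  [set S : {set word n q} | [&& S \subset C, #|S| <= t & desc S == desc C']].

Definition is_MIPPC (n q t : nat) (C : {set word n q}) : Prop :=
  forall C' : {set word n q}, C' \subset C -> 0 < #|C'| -> #|C'| <= t ->
    \bigcap_(S in St t C C') S != set0.

From Stdlib Require Import Reals Lra.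
From mathcomp Require Import all_boot zify.
Set Implicit Arguments. Unset Strict Implicit. Unset Printing Implicit Defensive.

(* Random construction with deletions.  Draw M words f_1, ..., f_M of Q^n and
   call a set J of between 2 and t^n indices bad when every coordinate takes at
   most t values on J and no word of J has, at any coordinate, a value that no
   other word of J shares.  If C' is a set of at most t codewords of a code
   without bad sets, the codewords lying in desc(C') do not form a bad set, so
   some c in C' is the only codeword of desc(C') with value c(i) at some
   coordinate i; then c belongs to every S in S_t(C').
   At a coordinate where the words of a bad J take s <= min(t, |J|/2) values,
   a fixed J of size m is bad with probability O(q^((s-m)n)), so the expected
   number of bad sets of size m is O(M^m q^((s-m)n)).  Since
   t(m-1) + s(2t-1) <= m(2t-1), this is at most M/(2(t^n+1)) as soon as
   (E M)^(2t-1) <= q^(tn) for a suitable constant E.  Deleting one index of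
   each bad set of a good draw leaves a t-MIPPC of at least M/2 words, and the
   largest admissible M is of order q^(tn/(2t-1)). *)

Lemma leq_expn2r m1 m2 e : m1 <= m2 -> m1 ^ e <= m2 ^ e.
Proof. by move=> le_m; elim: e => // e IH; rewrite !expnS leq_mul. Qed.

Lemma leq_bin_expn n m : 'C(n, m) <= n ^ m.
Proof.
rewrite (leq_trans (leq_pmulr _ (fact_gt0 m))) // bin_ffact ffact_prod.
rewrite -[X in _ <= _ ^ X]card_ord -prod_nat_const.
by apply: leq_prod => i _; apply: leq_subr.
Qed.

Lemma card_bigcup_le (I T : finType) (P : pred I) (F : I -> {set T}) :
  #|\bigcup_(i | P i) F i| <= \sum_(i | P i) #|F i|.
Proof.
elim/big_ind2: _ => [|a A b B le_A le_B|//]; first by rewrite cards0.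
by rewrite (leq_trans (leq_card_setU A B)) ?leq_add.
Qed.

Lemma exchange_card_sum (A B : finType) (R : A -> B -> bool) :
  \sum_a #|[set b | R a b]| = \sum_b #|[set a | R a b]|.
Proof.
have card_sum (T : finType) (P : pred T) : #|[set x | P x]| = \sum_x P x.
  by rewrite -sum1_card big_mkcond; apply: eq_bigr => x _; rewrite inE; case: (P x).
under eq_bigr do rewrite card_sum.
by rewrite exchange_big; apply: eq_bigr => b _; rewrite (card_sum _ (R^~ b)).
Qed.

Lemma sum_by_card (T : finType) (F : {set T} -> nat) L :
  \sum_(J : {set T} | #|J| <= L) F J = \sum_(m < L.+1) \sum_(J : {set T} | #|J| == m) F J.
Proof.
rewrite (partition_big (fun J : {set T} => inord #|J| : 'I_L.+1) predT) //.
apply: eq_bigr => m _; apply: eq_bigl => J; apply/andP/eqP => [[le_J /eqP <-]|eq_J].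
  by rewrite inordK.
by rewrite eq_J -ltnS ltn_ord; split => //; apply/eqP/val_inj; rewrite /= inordK.
Qed.

Lemma exists_le_avg (T : finType) (F : T -> nat) c :
  0 < #|T| -> \sum_x F x <= c * #|T| -> exists x, F x <= c.
Proof.
move=> T_gt0 le_sum; apply/existsP; apply: contraLR le_sum => /existsPn gt_c.
rewrite -ltnNge (@leq_trans (\sum_(x : T) c.+1)) //.
  by rewrite sum_nat_const -[#|xpredT|]/#|T| mulnC ltn_pmul2l.
by apply: leq_sum => x _; rewrite ltnNge gt_c.
Qed.

Definition box (I T : finType) (A : I -> {set T}) : {set {ffun I -> T}} :=
  [set w : {ffun I -> T} | [forall i, w i \in A i]].

Lemma card_box (I T : finType) (A : I -> {set T}) : #|box A| = \prod_i #|A i|.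
Proof.
transitivity #|family (fun i => mem (A i))|.
  by apply: eq_card => w; rewrite inE; apply/forallP/familyP.
by rewrite card_family foldrE big_map big_enum.
Qed.

Lemma leq_card_box (I T : finType) (A : I -> {set T}) s :
  (forall i, #|A i| <= s) -> #|box A| <= s ^ #|I|.
Proof. by move=> le_A; rewrite card_box -prod_nat_const; apply: leq_prod. Qed.

Lemma card_ffun_into_on (I T : finType) (J : {set I}) (B : {set T}) :
  #|[set f : {ffun I -> T} | [forall j in J, f j \in B]]|
    = #|B| ^ #|J| * #|T| ^ (#|I| - #|J|).
Proof.
pose A j := if j \in J then B else setT.
have -> : [set f : {ffun I -> T} | [forall j in J, f j \in B]] = box A.
  apply/setP => f; rewrite !inE; apply/forall_inP/forallP => f_B j.
    by rewrite /A; case: ifP => [/f_B|_]; rewrite ?inE.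
  by move=> J_j; have := f_B j; rewrite /A J_j.
rewrite card_box (bigID (mem J)) /=.
rewrite (eq_bigr (fun=> #|B|)) => [|j J_j]; last by rewrite /A J_j.
rewrite [X in _ * X](eq_bigr (fun=> #|T|)) => [|j J'_j]; last by rewrite /A (negbTE J'_j) cardsT.
rewrite !prod_nat_const; congr (_ * _ ^ _).
by rewrite -(cardsC J) addKn; apply: eq_card => j; rewrite !inE.
Qed.

Lemma double_card_imset_le (I T : finType) (g : I -> T) (J : {set I}) :
  {in J, forall j, exists2 j', j' \in J & (j' != j) && (g j' == g j)} ->
  (#|g @: J|).*2 <= #|J|.
Proof.
move=> no_single; rewrite -mul2n -[#|J|]sum1_card (partition_big g (mem (g @: J))) /=; last first.
  by move=> j J_j; apply: imset_f.
rewrite mulnC -sum_nat_const; apply: leq_sum => _ /imsetP[j J_j ->].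
have [j' J_j' /andP[ne_j' eq_g]] := no_single j J_j.
rewrite (eq_bigl (mem [set i in J | g i == g j])) => [|i]; last by rewrite !inE.
rewrite sum1_card; apply/card_gt1P; exists j, j'.
by rewrite !inE J_j J_j' eq_g eqxx eq_sym.
Qed.

Lemma card_small_subsets (T : finType) s :
  0 < #|T| -> #|[set X : {set T} | #|X| <= s]| <= s.+1 * #|T| ^ s.
Proof.
move=> T_gt0.
have -> : [set X : {set T} | #|X| <= s] = \bigcup_(k < s.+1) [set X : {set T} | #|X| == k].
  apply/setP => X; rewrite inE; apply/idP/bigcupP => [le_X|[k _]].
    by exists (Ordinal (le_X : #|X| < s.+1)); rewrite ?inE.
  by rewrite inE => /eqP ->; rewrite -ltnS.
rewrite (leq_trans (card_bigcup_le _ _)) // -[X in X * _]card_ord -sum_nat_const.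
apply: leq_sum => k _; rewrite card_draws (leq_trans (leq_bin_expn _ _)) //.
by rewrite leq_pexp2l // -ltnS.
Qed.

Lemma exists_avoiding_subset (T : finType) (B : {set {set T}}) :
  set0 \notin B ->
  exists R : {set T}, #|T| <= #|R| + #|B| /\ forall J : {set T}, J \subset R -> J \notin B.
Proof.
move=> B_nonempty.
set D := \bigcup_(J in B) [set x | [pick j in J] == Some x].
have card_D : #|D| <= #|B|.
  rewrite (leq_trans (card_bigcup_le _ _)) // -sum1_card; apply: leq_sum => J _.
  case: pickP => [x _|_]; last by rewrite (eq_card0 (fun x => _)) // => x; rewrite !inE.
  by rewrite (@eq_card1 _ x) // => y; rewrite !inE eq_sym.
exists (~: D); split; first by rewrite -(cardsC D) addnC leq_add2l.
move=> J sub_J; apply/negP => B_J.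
have /set0Pn[x J_x] : J != set0 by apply: contraNneq B_nonempty => <-.
case E: [pick j in J] => [y|]; last by move: E; case: pickP => // /(_ x); rewrite J_x.
have J_y : y \in J by move: E; case: pickP => // z J_z [<-].
have D_y : y \in D by apply/bigcupP; exists J; rewrite // inE E.
by have := subsetP sub_J y J_y; rewrite inE D_y.
Qed.

(* The exponent tn/(2t-1) of the theorem comes from this inequality, which is
   tight for s = t and m = 2t. *)
Lemma exponent_ineq t m s :
  s <= t -> s.*2 <= m -> t * (m - 1) + s * (2 * t - 1) <= m * (2 * t - 1).
Proof. move=> le_st le_sm; nia. Qed.

Lemma expn_tradeoff n q t m s e M :
  0 < q -> 0 < t -> 1 < m -> s <= t -> s.*2 <= m -> 0 < e ->
  (e * M) ^ (2 * t - 1) <= q ^ (t * n) -> e * M ^ m * q ^ (s * n) <= M * q ^ (n * m).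
Proof.
move=> q_gt0 t_gt0 m_gt1 le_st le_sm e_gt0 le_eM.
have k_gt0 : 0 < 2 * t - 1 by lia.
have eM_le : e * M ^ m <= M * (e * M) ^ (m - 1).
  have -> : m = (m - 2).+2 by lia.
  rewrite subSS subn0 expnS expnMn mulnCA leq_mul2l leq_mul2r.
  by rewrite -{1}[e]expn1 leq_pexp2l ?orbT.
have pow_le : (e * M) ^ (m - 1) * q ^ (s * n) <= q ^ (n * m).
  rewrite -(leq_exp2r _ _ k_gt0) expnMn expnAC.
  rewrite (leq_trans (leq_mul (leq_expn2r _ le_eM) (leqnn _))) // -!expnM -expnD.
  by rewrite leq_pexp2l //; have := exponent_ineq le_st le_sm; nia.
by rewrite (leq_trans (leq_mul eM_le (leqnn _))) // -mulnA leq_mul2l pow_le orbT.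
Qed.

Lemma exists_max_le e k Q : 0 < e -> 0 < k -> exists M, (e * M) ^ k <= Q < (e * M.+1) ^ k.
Proof.
move=> e_gt0 k_gt0; pose P M := (e * M) ^ k <= Q.
have P0 : exists M, P M by exists 0; rewrite /P muln0 exp0n.
have P_bounded M : P M -> M <= Q.
  move=> PM; rewrite (leq_trans _ PM) // (leq_trans (leq_pmull M e_gt0)) //.
  by case: (e * M) => // m; rewrite -{1}[m.+1]expn1 leq_pexp2l.
case: (ex_maxnP P0 P_bounded) => M PM max_M; exists M; rewrite [_ <= Q]PM ltnNge.
by apply/negP => /max_M; rewrite ltnn.
Qed.

Lemma subset_desc n q (S : {set word n q}) : S \subset desc S.
Proof. by apply/subsetP => w S_w; rewrite inE; apply/forallP => i; apply: imset_f. Qed.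

Lemma card_desc n q (S : {set word n q}) : #|desc S| <= #|S| ^ n.
Proof.
rewrite -[n in _ ^ n]card_ord; apply: (@leq_card_box _ _ (coord_set S)) => i.
exact: leq_imset_card.
Qed.

Lemma mem_bigcap_St n q t (C C' : {set word n q}) c i :
  c \in C' -> {in C, forall d, d \in desc C' -> d i = c i -> d = c} ->
  c \in \bigcap_(S in St t C C') S.
Proof.
move=> C'_c pinned; apply/bigcapP => S; rewrite inE => /and3P[sub_SC _ /eqP desc_S].
have : c \in desc S by rewrite desc_S (subsetP (subset_desc C')).
rewrite inE => /forallP/(_ i)/imsetP[d S_d c_i].
by rewrite -(pinned d) ?(subsetP sub_SC) // -desc_S (subsetP (subset_desc S)).
Qed.

(* The factor 2 (t^n + 1) shares M/2 among the t^n + 1 possible sizes of a bad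
   set; t.+1 ^ n and t ^ (n * t^n) bound the factors of the count that depend on
   the number s <= t of values per coordinate. *)
Definition mippc_const (n t : nat) : nat :=
  2 * (t ^ n).+1 * (t.+1 ^ n * t ^ (n * t ^ n)).

Lemma mippc_const_gt0 n t : 0 < t -> 0 < mippc_const n t.
Proof. by move=> t_gt0; rewrite !muln_gt0 !expn_gt0 t_gt0. Qed.

Section RandomWords.
Variables (n q t : nat) (I : finType).
Hypotheses (n_gt0 : 0 < n) (t_gt1 : 1 < t) (q_gt0 : 0 < q).
Local Notation L := (t ^ n).

Definition bad (f : I -> word n q) (J : {set I}) : bool :=
  [&& 1 < #|J|, #|J| <= L,
      [forall i, #|[set f j i | j in J]| <= t] &
      [forall j in J, forall i, exists j' in J, (j' != j) && (f j' i == f j i)]].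

Lemma card_word : #|word n q| = q ^ n.
Proof. by rewrite card_ffun !card_ord. Qed.

Lemma card_few_values (J : {set I}) s :
  #|[set f : {ffun I -> word n q} | [forall i, #|[set f j i | j in J]| <= s]]|
    <= (s.+1 * q ^ s) ^ n * (s ^ n) ^ #|J| * (q ^ n) ^ (#|I| - #|J|).
Proof.
pose boxes := box (fun i : 'I_n => [set X : {set 'I_q} | #|X| <= s]).
have few_sub : [set f : {ffun I -> word n q} | [forall i, #|[set f j i | j in J]| <= s]]
    \subset \bigcup_(A in boxes) [set f : {ffun I -> word n q} | [forall j in J, f j \in box A]].
  apply/subsetP => f; rewrite inE => /forallP few_f.
  apply/bigcupP; exists [ffun i => [set f j i | j in J]].
    by rewrite inE; apply/forallP => i; rewrite ffunE inE.
  rewrite inE; apply/forall_inP => j J_j; rewrite inE; apply/forallP => i.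
  by rewrite ffunE; apply/imsetP; exists j.
rewrite (leq_trans (subset_leq_card few_sub)) // (leq_trans (card_bigcup_le _ _)) //.
apply: (@leq_trans (\sum_(A in boxes) (s ^ n) ^ #|J| * (q ^ n) ^ (#|I| - #|J|))).
  apply: leq_sum => A; rewrite inE => /forallP small_A.
  rewrite card_ffun_into_on card_word leq_mul2r leq_expn2r ?orbT //.
  by rewrite -[n in s ^ n]card_ord; apply: leq_card_box => i; have := small_A i; rewrite inE.
have card_boxes : #|boxes| <= (s.+1 * q ^ s) ^ n.
  rewrite -[n in _ ^ n]card_ord; apply: leq_card_box => i.
  by have := @card_small_subsets 'I_q s; rewrite card_ord; apply.
by rewrite sum_nat_const mulnA !leq_mul2r card_boxes !orbT.
Qed.

Lemma bad_size_term_le m s :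
  1 < m <= L -> s <= t -> s.*2 <= m ->
  (mippc_const n t * #|I|) ^ (2 * t - 1) <= q ^ (t * n) ->
  2 * L.+1 * ('C(#|I|, m) * ((s.+1 * q ^ s) ^ n * (s ^ n) ^ m * (q ^ n) ^ (#|I| - m)))
    <= #|I| * (q ^ n) ^ #|I|.
Proof.
move=> /andP[m_gt1 le_mL] le_st le_sm le_EM.
have [lt_Im|le_mI] := ltnP #|I| m; first by rewrite bin_small ?mul0n ?muln0.
set M := #|I| in le_EM le_mI *.
have tradeoff := expn_tradeoff q_gt0 (ltnW t_gt1) m_gt1 le_st le_sm
  (mippc_const_gt0 n (ltnW t_gt1)) le_EM.
have le_s1 : (s.+1 * q ^ s) ^ n <= t.+1 ^ n * q ^ (s * n).
  by rewrite expnMn -expnM leq_mul2r leq_expn2r ?orbT.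
have le_sn : (s ^ n) ^ m <= t ^ (n * L).
  rewrite -expnM (leq_trans (leq_expn2r _ le_st)) // leq_pexp2l ?leq_mul2l ?le_mL ?orbT //.
  lia.
apply: (@leq_trans (mippc_const n t * M ^ m * q ^ (s * n) * (q ^ n) ^ (M - m))).
  have -> : mippc_const n t * M ^ m * q ^ (s * n) * (q ^ n) ^ (M - m) =
      2 * L.+1 * (M ^ m * (t.+1 ^ n * q ^ (s * n) * t ^ (n * L) * (q ^ n) ^ (M - m))).
    by rewrite /mippc_const; lia.
  by rewrite leq_mul2l (leq_mul (leq_bin_expn _ _)) ?orbT // leq_mul // leq_mul.
apply: leq_trans (leq_mul tradeoff (leqnn _)) _.
by rewrite -mulnA expnM -expnD subnKC.
Qed.

Lemma sum_card_bad_of_size m : m < L.+1 ->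
  (mippc_const n t * #|I|) ^ (2 * t - 1) <= q ^ (t * n) ->
  2 * L.+1 * \sum_(J : {set I} | #|J| == m) #|[set f : {ffun I -> word n q} | bad f J]|
    <= #|I| * (q ^ n) ^ #|I|.
Proof.
move=> le_mL le_EM.
have [m_le1|m_gt1] := leqP m 1.
  rewrite big1 ?muln0 // => J /eqP card_J; apply/eqP; rewrite cards_eq0; apply/eqP/setP => f.
  by rewrite !inE /bad card_J ltnNge m_le1.
set s := minn t m./2.
have bad_few (J : {set I}) : #|J| = m ->
    [set f : {ffun I -> word n q} | bad f J]
      \subset [set f : {ffun I -> word n q} | [forall i, #|[set f j i | j in J]| <= s]].
  move=> card_J; apply/subsetP => f.
  rewrite !inE => /and4P[_ _ /forallP le_t /forall_inP shared].
  apply/forallP => i; rewrite leq_min le_t geq_half_double -card_J.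
  apply: double_card_imset_le => j J_j.
  by have /forallP/(_ i)/exists_inP[j' J_j' ?] := shared j J_j; exists j'.
rewrite (leq_trans _ (@bad_size_term_le m s _ _ _ le_EM)) ?m_gt1 ?geq_minl //; last first.
  by rewrite -geq_half_double geq_minr.
rewrite leq_mul2l; apply/orP; right.
rewrite -card_draws -sum_nat_const.
rewrite [X in _ <= X](eq_bigl (fun J : {set I} => #|J| == m)) => [|J]; last by rewrite inE.
apply: leq_sum => J /eqP card_J; rewrite -card_J.
exact: leq_trans (subset_leq_card (bad_few J card_J)) (card_few_values J s).
Qed.

Lemma sum_card_bad :
  (mippc_const n t * #|I|) ^ (2 * t - 1) <= q ^ (t * n) ->
  2 * \sum_(f : {ffun I -> word n q}) #|[set J | bad f J]| <= #|I| * (q ^ n) ^ #|I|.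
Proof.
move=> le_EM; rewrite exchange_card_sum.
rewrite (bigID (fun J : {set I} => #|J| <= L)) /=.
rewrite [X in _ * (_ + X)]big1 ?addn0 => [|J]; last first.
  rewrite -ltnNge => lt_LJ; apply/eqP; rewrite cards_eq0; apply/eqP/setP => f.
  by rewrite !inE /bad [#|J| <= _]leqNgt lt_LJ andbF.
rewrite (sum_by_card (fun J => #|[set f : {ffun I -> word n q} | bad f J]|)).
rewrite -(leq_pmul2l (ltn0Sn L)) mulnA [L.+1 * 2]mulnC big_distrr /=.
apply: (@leq_trans (\sum_(m < L.+1) #|I| * (q ^ n) ^ #|I|)).
  by apply: leq_sum => m _; apply: sum_card_bad_of_size.
by rewrite sum_nat_const card_ord.
Qed.

Lemma exists_few_bad :
  (mippc_const n t * #|I|) ^ (2 * t - 1) <= q ^ (t * n) ->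
  exists f : {ffun I -> word n q}, (#|[set J | bad f J]|).*2 <= #|I|.
Proof.
move=> le_EM; apply: exists_le_avg; first by rewrite card_ffun card_word !expn_gt0 q_gt0.
rewrite card_ffun card_word; under eq_bigr do rewrite -mul2n.
by rewrite -big_distrr sum_card_bad.
Qed.

Lemma bad_pair f j j' : j != j' -> f j = f j' -> bad f [set j; j'].
Proof.
move=> ne_jj' eq_f; have L_gt1 : 1 < L by rewrite -(exp1n n) ltn_exp2r.
rewrite /bad cards2 ne_jj' L_gt1 /=; apply/andP; split.
  by apply/forallP => i; rewrite (leq_trans (leq_imset_card _ _)) // cards2 ne_jj'.
apply/forall_inP => k; rewrite !inE => /orP[]/eqP-> ; apply/forallP => i; apply/exists_inP.
  by exists j'; rewrite ?inE ?eqxx ?orbT // eq_sym ne_jj' eq_f eqxx.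
by exists j; rewrite ?inE ?eqxx // ne_jj' eq_f eqxx.
Qed.

Lemma injective_of_no_bad f (R : {set I}) :
  (forall J : {set I}, J \subset R -> ~~ bad f J) -> {in R &, injective f}.
Proof.
move=> no_bad j j' R_j R_j' eq_f; have [//|ne_jj'] := eqVneq j j'.
have sub_R : [set j; j'] \subset R by apply/subsetP => k /set2P[]->.
by have := no_bad _ sub_R; rewrite bad_pair.
Qed.

Lemma bad_desc_preimage f (R : {set I}) (C' : {set word n q}) :
  {in R &, injective f} -> C' \subset f @: R -> 0 < #|C'| <= t ->
  (forall c i, c \in C' ->
     exists2 d, d \in f @: R & [&& d \in desc C', d i == c i & d != c]) ->
  bad f [set j in R | f j \in desc C'].
Proof.
move=> inj sub_C' /andP[C'_gt0 le_C't] unpinned; set J := [set j in R | _].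
have sub_JR : J \subset R by apply/subsetP => j; rewrite inE => /andP[].
have in_J j : j \in R -> f j \in desc C' -> j \in J.
  by move=> R_j desc_j; rewrite inE R_j desc_j.
have preimage d : d \in f @: R -> d \in desc C' -> exists2 j, j \in J & d = f j.
  by case/imsetP => j R_j -> desc_j; exists j; rewrite ?in_J.
apply/and4P; split.
- have [c C'_c] := card_gt0P C'_gt0.
  have [j J_j eq_c] := preimage c (subsetP sub_C' c C'_c) (subsetP (subset_desc C') c C'_c).
  have [d /preimage pre_d /and3P[desc_d _ ne_dc]] := unpinned c (Ordinal n_gt0) C'_c.
  have [j' J_j' eq_d] := pre_d desc_d.
  apply/card_gt1P; exists j, j'; split => //; apply: contraNneq ne_dc => eq_jj'.
  by rewrite eq_d -eq_jj' eq_c.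
- have inj_J : {in J &, injective f}.
    by move=> x y /(subsetP sub_JR) ? /(subsetP sub_JR); apply: inj.
  rewrite -(card_in_imset inj_J).
  rewrite (leq_trans _ (leq_trans (card_desc C') (leq_expn2r _ le_C't))) //.
  by apply/subset_leq_card/subsetP => w /imsetP[j]; rewrite inE => /andP[_ ?] ->.
- apply/forallP => i.
  apply: leq_trans (leq_trans (leq_imset_card (fun d : word n q => d i) C') le_C't).
  apply/subset_leq_card/subsetP => x /imsetP[j]; rewrite inE => /andP[_].
  by rewrite inE => /forallP/(_ i) ? ->.
- apply/forall_inP => j J_j; apply/forallP => i; apply/exists_inP.
  have := J_j; rewrite inE => /andP[_]; rewrite inE => /forallP/(_ i)/imsetP[c C'_c eq_i].
  have [eq_c|ne_c] := eqVneq (f j) c.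
    have [d /preimage pre_d /and3P[desc_d eq_d ne_d]] := unpinned c i C'_c.
    have [k J_k d_k] := pre_d desc_d; subst d.
    by exists k; rewrite // eq_i eq_d andbT; apply: contraNneq ne_d => ->; apply/eqP.
  have [k J_k eq_k] := preimage c (subsetP sub_C' c C'_c) (subsetP (subset_desc C') c C'_c).
  by exists k; rewrite // -eq_k eq_i eqxx andbT; apply: contraNneq ne_c => <-; rewrite eq_k.
Qed.

Lemma is_MIPPC_imset f (R : {set I}) :
  (forall J : {set I}, J \subset R -> ~~ bad f J) -> is_MIPPC t (f @: R).
Proof.
move=> no_bad C' sub_C' C'_gt0 le_C't.
have [/exists_inP[c C'_c /existsP[i /forall_inP pinned]]|unpinned] := boolP
  [exists c in C', exists i,
     [forall d in f @: R, (d \in desc C') ==> (d i == c i) ==> (d == c)]].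
  apply/set0Pn; exists c; apply: (@mem_bigcap_St _ _ _ _ _ c i) => // d R_d desc_d eq_i.
  by apply/eqP; have := pinned d R_d; rewrite desc_d eq_i eqxx.
have sub_R : [set j in R | f j \in desc C'] \subset R.
  by apply/subsetP => j; rewrite inE => /andP[].
have /negP[] := no_bad _ sub_R.
apply: bad_desc_preimage; rewrite ?C'_gt0 //; first exact: injective_of_no_bad.
move=> c i C'_c; move: unpinned; rewrite negb_exists_in => /forall_inP/(_ c C'_c).
rewrite negb_exists => /forallP/(_ i); rewrite negb_forall_in => /exists_inP[d R_d].
by rewrite !negb_imply => ?; exists d.
Qed.

End RandomWords.

Lemma exists_large_MIPPC n q t M : 0 < n -> 1 < t -> 0 < q ->
  (mippc_const n t * M) ^ (2 * t - 1) <= q ^ (t * n) ->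
  exists C : {set word n q}, is_MIPPC t C /\ M <= (#|C|).*2.
Proof.
move=> n_gt0 t_gt1 q_gt0 le_EM.
have [|f few_bad] := @exists_few_bad n q t 'I_M n_gt0 t_gt1 q_gt0; first by rewrite card_ord.
have [|R [large_R avoid_R]] := @exists_avoiding_subset _ [set J | bad t f J].
  by rewrite inE /bad cards0.
have no_bad (J : {set 'I_M}) : J \subset R -> ~~ bad t f J by move/avoid_R; rewrite inE.
exists (f @: R); split; first exact: is_MIPPC_imset no_bad.
rewrite card_in_imset; last exact: injective_of_no_bad no_bad.
by move: few_bad large_R; rewrite card_ord; set b := #|_|; lia.
Qed.

Section RealBounds.
Local Open Scope R_scope.

Lemma INR_expn a b : INR (a ^ b) = INR a ^ b.
Proof. by elim: b => [|b IH] //; rewrite expnS -multE mult_INR IH. Qed.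

Lemma Rpower_lt_of_expn_lt a b k y : (0 < a)%N -> (0 < k)%N -> (a ^ b < y ^ k)%N ->
  Rpower (INR a) (INR b / INR k) < INR y.
Proof.
move=> a_gt0 k_gt0 lt_ab.
have aR : 0 < INR a by apply/lt_0_INR/ltP.
have kR : 0 < INR k by apply/lt_0_INR/ltP.
set x := Rpower _ _.
have x_k : x ^ k = INR a ^ b.
  rewrite -Rpower_pow; last exact: exp_pos.
  rewrite /x Rpower_mult -Rpower_pow //; congr Rpower; field; lra.
apply: Rnot_le_lt => le_yx.
have : INR y ^ k <= x ^ k by apply: pow_incr; split; [apply: pos_INR|].
by rewrite x_k -!INR_expn => /INR_le/leP; rewrite leqNgt lt_ab.
Qed.

Lemma INR_le_Rpower a b k :
  (0 < a)%N -> (0 < k <= b)%N -> INR a <= Rpower (INR a) (INR b / INR k).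
Proof.
move=> a_gt0 /andP[/ltP/lt_0_INR kR /leP/le_INR le_kb].
have aR : 1 <= INR a by apply/(le_INR 1)/leP.
rewrite -{1}(Rpower_1 (INR a)); last lra.
apply: Rle_Rpower => //; apply: (Rmult_le_reg_r (INR k)) => //.
by rewrite Rmult_1_l /Rdiv Rmult_assoc Rinv_l ?Rmult_1_r //; lra.
Qed.

Lemma le_scaled_root (E M C q : nat) (x : R) :
  (0 < E)%N -> (M <= C.*2)%N -> (E.*2 <= q)%N ->
  INR q <= x -> x < INR E * INR M.+1 -> 1 / (4 * INR E) * x <= INR C.
Proof.
move=> E_gt0 /leP/le_INR le_MC /leP/le_INR le_Eq le_qx lt_xM.
have ER : 0 < INR E by apply/lt_0_INR/ltP.
rewrite -!addnn -!plusE !plus_INR in le_MC le_Eq; rewrite S_INR in lt_xM.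
have le_EM : INR E * INR M <= INR E * (INR C + INR C) by apply: Rmult_le_compat_l; lra.
apply: (Rmult_le_reg_l (4 * INR E)); first lra.
have -> : 4 * INR E * (1 / (4 * INR E) * x) = x by field; lra.
lra.
Qed.

End RealBounds.

Theorem theorem5 (n t : nat) (hn : 2 <= n) (ht : 2 <= t) :
  exists c : R, Rlt 0 c /\
    exists q0 : nat, forall q : nat, q0 <= q ->
      exists C : {set word n q},
        is_MIPPC t C /\
        Rle (Rmult c (Rpower (INR q) (Rdiv (INR (t * n)) (INR (2 * t - 1)))))
            (INR #|C|).
Proof.
set E := mippc_const n t.
have E_gt0 : 0 < E by apply: mippc_const_gt0; lia.
have ER : Rlt 0 (INR E) by apply/lt_0_INR/ltP.
exists (Rdiv 1 (Rmult 4 (INR E))); split; first by apply: Rdiv_lt_0_compat; lra.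
exists E.*2 => q le_Eq.
have k_gt0 : 0 < 2 * t - 1 by lia.
have [M /andP[le_EM lt_EM]] := exists_max_le (q ^ (t * n)) E_gt0 k_gt0.
have [|||C [C_MIPPC le_MC]] := exists_large_MIPPC _ _ _ le_EM; try lia.
exists C; split => //.
apply: (le_scaled_root E_gt0 le_MC le_Eq).
- by apply: INR_le_Rpower; [lia | apply/andP; split; nia].
- by rewrite -mult_INR; apply: Rpower_lt_of_expn_lt => //; lia.
Qed.
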